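(* Let $A$ be a noetherian ring and let $M$ be a finitely generated $A$-module. Then \[\mathcal{R}(M)=\operatorname{im}\bigl(\operatorname{Sym}(M)\to\Gamma(M^\ast)^\vee\bigr),\] where $\operatorname{Sym}(M)\to\Gamma(M^\ast)^\vee$ is the homomorphism of graded $A$-algebras induced (by the universal property of the symmetric algebra) by the canonical module homomorphism $M\to M^{\ast\ast}$, where $M^{\ast\ast}=\operatorname{Hom}_A(\Gamma^1(M^\ast),A)$ is the degree $1$ part of $\Gamma(M^\ast)^\vee$. (Here ''equal'' means that the quotient $\operatorname{Sym}(M)/\bigcap_g L_g$ and the image are the same quotient of $\operatorname{Sym}(M)$, i.e. $\bigcap_g L_g$ is the kernel of $\operatorname{Sym}(M)\to\Gamma(M^\ast)^\vee$.)
   Context: All rings are commutative with unit, algebras are commutative, associative and unital. $M^\ast=\operatorname{Hom}_A(M,A)$. The Rees algebra of a finitely generated $A$-module $M$ is $\mathcal{R}(M)=\operatorname{Sym}(M)/\bigcap_g L_g$, where $g$ runs over all $A$-module homomorphisms $g\colon M\to E$ with $E$ a free $A$-module, and $L_g=\ker(\operatorname{Sym}(g)\colon\operatorname{Sym}(M)\to\operatorname{Sym}(E))$. The algebra of divided powers of an $A$-module $N$ is $\Gamma(N)=A[X(n,x)]_{(n,x)\in\mathbb{N}\times N}/I$, where $I$ is generated by $X(0,x)-1$, $X(n,fx)-f^nX(n,x)$, $X(m,x)X(n,x)-\binom{m+n}{m}X(m+n,x)$, and $X(n,x+y)-\sum_{i+j=n}X(i,x)X(j,y)$ for all $x,y\in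 N$, $m,n\in\mathbb{N}$, $f\in A$; $\gamma^n_N(x)$ denotes the class of $X(n,x)$ and $\times$ the multiplication. It is graded with $\Gamma^n(N)$ spanned by products $\gamma^{n_1}_N(x_1)\times\dots\times\gamma^{n_k}_N(x_k)$ with $n_1+\dots+n_k=n$; $\Gamma^1(N)=N$. $\Gamma(N)$ has comultiplication $\Delta\colon\Gamma(N)\to\Gamma(N\oplus N)\cong\Gamma(N)\otimes_A\Gamma(N)$ induced by the diagonal, given by $\gamma^n_N(x)\mapsto\sum_{i+j=n}\gamma^i_N(x)\otimes\gamma^j_N(x)$, and counit induced by $N\to 0$. For a graded $A$-algebra $B=\bigoplus_{n\ge0}B_n$, the graded dual is $B^\vee=\bigoplus_{n\ge 0}\operatorname{Hom}_A(B_n,A)$. For $B=\Gamma(N)$, $\Gamma(N)^\vee$ is a graded $A$-algebra with product $u\bullet v$ (for $u\in\Gamma^i(N)^\ast$, $v\in\Gamma^j(N)^\ast$) defined by $(u\bullet v)(\gamma)=(u\otimes v)(\Delta(\gamma))$ for $\gamma\in\Gamma^{i+j}(N)$, and unit dual to the counit. *)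

From HB Require Import structures.
From mathcomp Require Import all_boot all_order all_algebra.
From mathcomp Require Import boolp.
From mathcomp Require Import finmap.
From mathcomp.multinomials Require Import monalg.

Set Implicit Arguments.
Unset Strict Implicit.
Unset Printing Implicit Defensive.

Import GRing.Theory.
Local Open Scope ring_scope.

Definition is_ideal (A : comNzRingType) (I : A -> Prop) : Prop :=
  [/\ I 0, (forall x y, I x -> I y -> I (x + y)) & (forall a x, I x -> I (a * x))].

Definition ideal_fg (A : comNzRingType) (I : A -> Prop) : Prop :=
  exists s : seq A, forall x,
    I x <-> exists c : 'I_(size s) -> A, x = \sum_(i < size s) c i * s`_i.

Definition noetherian_ring (A : comNzRingType) : Prop :=
  forall I : A -> Prop, is_ideal I -> ideal_fg I.

Definition module_fg (A : comNzRingType) (M : lmodType A) : Prop :=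
  exists s : seq M, forall m : M,
    exists c : 'I_(size s) -> A, m = \sum_(i < size s) c i *: s`_i.

Definition cmeval (I : choiceType) (R : nzRingType) (f : I -> R) (k : {cmonom I}) : R :=
  \prod_(i <- finsupp k) f i ^+ k i.

(* Sym(M) is the quotient of the polynomial algebra SymPre M =         *)
(* A[X_m : m in M] by the linearity relations X_(m+m') - X_m - X_m',   *)
(* X_(a m) - a X_m.  Elements of Sym(M) are represented by elements of *)
(* SymPre M; all maps out of Sym(M) below are given on SymPre M and    *)
(* factor through Sym(M).  The degree of a monomial is mdeg.           *)

Definition SymPre (A : comNzRingType) (M : lmodType A) := {malg A[{cmonom M}]}.

Definition mvar (I : choiceType) (A : comNzRingType) (i : I) : {malg A[{cmonom I}]} :=
  << ucm i >>.

(* A free A-module with basis I is {malg A[I]} (finitely supported maps I -> A);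
   its symmetric algebra is the polynomial algebra {malg A[{cmonom I}]}.
   linpoly e is the image of e in Sym^1(E). *)
Definition linpoly (A : comNzRingType) (I : choiceType) (e : {malg A[I]})
  : {malg A[{cmonom I}]} :=
  \sum_(i <- msupp e) e@_i *: mvar A i.

Definition Symmap (A : comNzRingType) (M : lmodType A) (I : choiceType)
  (g : {linear M -> {malg A[I]}}) (s : SymPre M) : {malg A[{cmonom I}]} :=
  \sum_(k <- msupp s) s@_k *: cmeval (fun m => linpoly (g m)) k.

Definition in_all_Lg (A : comNzRingType) (M : lmodType A) (s : SymPre M) : Prop :=
  forall (I : choiceType) (g : {linear M -> {malg A[I]}}), Symmap g s = 0.

Record dual (A : comNzRingType) (M : lmodType A) := Dual {
  dfun :> M -> A;
  dfun_lin : forall (a : A) (x y : M), dfun (a *: x + y) = a * dfun x + dfun y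
}.

HB.instance Definition _ (A : comNzRingType) (M : lmodType A) :=
  gen_eqMixin (dual M).
HB.instance Definition _ (A : comNzRingType) (M : lmodType A) :=
  gen_choiceMixin (dual M).

Section DualOps.
Variables (A : comNzRingType) (M : lmodType A).

Lemma dadd_lin (x y : dual M) (a : A) (u v : M) :
  (fun m => x m + y m) (a *: u + v) =
  a * (fun m => x m + y m) u + (fun m => x m + y m) v.
Proof.
by rewrite /= !dfun_lin mulrDr !addrA; congr (_ + _); rewrite -!addrA; congr (_ + _);
  rewrite addrC.
Qed.

Definition dadd (x y : dual M) : dual M := @Dual A M _ (dadd_lin x y).

Lemma dscale_lin (f : A) (x : dual M) (a : A) (u v : M) :
  (fun m => f * x m) (a *: u + v) = a * (fun m => f * x m) u + (fun m => f * x m) v.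
Proof. by rewrite /= dfun_lin mulrDr mulrCA. Qed.

Definition dscale (f : A) (x : dual M) : dual M := @Dual A M _ (dscale_lin f x).
End DualOps.

(* Divided powers of N = M^*.                                          *)
(* GPre M is the polynomial algebra A[X(n,x)]_{(n,x) in N x N};        *)
(* Gamma(N) = GPre M / I with I generated by the elements satisfying   *)
(* gamma_gen below.  X(n,x) has degree n; Gamma^n(N) is the image of   *)
(* the degree-n part of GPre M (mwt = weighted degree of a monomial).  *)

Definition GVar (A : comNzRingType) (M : lmodType A) := (nat * dual M)%type.
Definition GPre (A : comNzRingType) (M : lmodType A) := {malg A[{cmonom (GVar M)}]}.

Definition GX (A : comNzRingType) (M : lmodType A) (n : nat) (x : dual M) : GPre M :=
  mvar A ((n, x) : GVar M).

Definition mwt (A : comNzRingType) (M : lmodType A) (k : {cmonom (GVar M)}) : nat :=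
  (\sum_(v <- finsupp k) k v * v.1)%N.

(* generators of the ideal I (documentation of Gamma; the functionals
   built below all vanish on I, i.e. they are functionals on Gamma) *)
Definition gamma_gen (A : comNzRingType) (M : lmodType A) (r : GPre M) : Prop :=
  (exists x, r = GX 0 x - 1) \/
  (exists n f x, r = GX n (dscale f x) - (f ^+ n) *: GX n x) \/
  (exists m n x, r = GX m x * GX n x - ('C(m + n, m))%:R *: GX (m + n) x) \/
  (exists n x y, r = GX n (dadd x y) - \sum_(i < n.+1) GX i x * GX (n - i) y).

(* A-linear functionals on GPre M are given by their values on monomials;
   Gamma^n(N)^* is identified with the functionals on the degree-n part
   of GPre M vanishing on I. *)
Definition GFun (A : comNzRingType) (M : lmodType A) := {cmonom (GVar M)} -> A.

Definition glin (A : comNzRingType) (M : lmodType A) (u : GFun M) (p : GPre M) : A :=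
  \sum_(k <- msupp p) p@_k * u k.

Definition in_GammaDual (A : comNzRingType) (M : lmodType A) (n : nat) (u : GFun M) : Prop :=
  (forall p r, gamma_gen r -> glin u (p * r) = 0) /\
  (forall k, mwt k != n -> u k = 0).

(* Comultiplication, lifted to GPre M:  GPre M -> GPre M (x) GPre M,
   where GPre M (x) GPre M is realized as {malg (GPre M)[{cmonom (GVar M)}]}
   (left tensor factor = coefficients, right factor = monomials). *)
Definition GPre2 (A : comNzRingType) (M : lmodType A) := {malg (GPre M)[{cmonom (GVar M)}]}.

Definition DeltaVar (A : comNzRingType) (M : lmodType A) (v : GVar M) : GPre2 M :=
  \sum_(i < v.1.+1) (GX i v.2)%:MP * mvar (GPre M) ((v.1 - i)%N, v.2).

Definition Delta (A : comNzRingType) (M : lmodType A) (p : GPre M) : GPre2 M :=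
  \sum_(k <- msupp p) ((p@_k)%:MP : GPre M)%:MP * cmeval (@DeltaVar A M) k.

(* product of the graded dual:  (u . v)(g) = (u (x) v)(Delta g) *)
Definition gdot (A : comNzRingType) (M : lmodType A) (u v : GFun M) : GFun M :=
  fun k => let q := Delta (<< k >> : GPre M) in
           \sum_(j <- msupp q) glin u q@_j * v j.

(* unit of the graded dual: dual to the counit induced by N -> 0,
   i.e. X(n,x) |-> (n == 0) *)
Definition geps (A : comNzRingType) (M : lmodType A) : GFun M :=
  fun k => cmeval (fun v : GVar M => ((v.1 == 0)%N)%:R : A) k.

(* the canonical map M -> M^** = Hom_A(Gamma^1(M^* ), A), m |-> (x |-> x(m)),
   with Gamma^1(N) = N via x |-> gamma^1(x); the degree-1 monomials of
   GPre M are X(1,x) * prod X(0,y_j), whose class in Gamma is gamma^1(x). *)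
Definition gev (A : comNzRingType) (M : lmodType A) (m : M) : GFun M :=
  fun k => if mwt k == 1%N
           then \sum_(v <- finsupp k | v.1 == 1%N) v.2 m
           else 0.

(* image of a monomial of Sym(M) under the algebra map Sym(M) -> Gamma(M^* )^v *)
Definition gev_mon (A : comNzRingType) (M : lmodType A) (k : {cmonom M}) : GFun M :=
  \big[@gdot A M/@geps A M]_(m <- finsupp k) iter (k m) (gdot (gev m)) (@geps A M).

(* degree-n component of the image of s in Gamma(M^* )^v, as a functional *)
Definition SymToGammaDual (A : comNzRingType) (M : lmodType A) (n : nat)
  (s : SymPre M) : GFun M :=
  fun mu => \sum_(k <- msupp s | mdeg k == n) s@_k * gev_mon k mu.

(* s lies in the kernel of Sym(M) -> Gamma(M^* )^v: every graded
   component vanishes on Gamma^n(M^* ), i.e. on all degree-n monomials *)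
Definition in_ker_SymToGammaDual (A : comNzRingType) (M : lmodType A) (s : SymPre M) : Prop :=
  forall (n : nat) (mu : {cmonom (GVar M)}), mwt mu = n -> SymToGammaDual n s mu = 0.

(** Both conditions on [s] are coefficientwise.  A family of linear forms
    [x_j] on [M], indexed by a duplicate-free list [js], gives the linear map
    [g : M -> A^(J)], [m |-> sum_j x_j(m) e_j], and the image of [s] in
    [Gamma(M^* )^v] takes on the monomial [prod_j X(c_j, x_j)] the value of
    the coefficient of [X^c] in [Sym(g)(s)].  This is clear in degree one and
    is preserved under products: splitting the comultiplication
    [X(n, x) |-> sum_(i+j=n) X(i, x) (x) X(j, x)] one variable at a time is
    the Leibniz rule for the coefficients of a product of polynomials.  Every
    map to a free module is of this form on the finitely many basis vectors
    occurring in a given coefficient, and every monomial of the presentation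
    of [Gamma(M^* )] is of the form [prod_j X(c_j, x_j)] once its variables
    are listed with multiplicity, so the two kernels coincide. *)
From HB Require Import structures.
From mathcomp Require Import all_boot all_order all_algebra.
From mathcomp Require Import boolp.
From mathcomp Require Import finmap.
From mathcomp.multinomials Require Import monalg.

Set Implicit Arguments.
Unset Strict Implicit.
Unset Printing Implicit Defensive.
Import GRing.Theory.
Local Open Scope ring_scope.
Local Notation "1" := (@mone _) : monom_scope.
Local Notation "x * y" := (mmul x y) : monom_scope.

Section Cmonom.
Variable I : choiceType.

Definition cmset (i : I) (d : nat) (k : {cmonom I}) : {cmonom I} :=
  [cmonom (if j == i then d else k j) | j in i |` finsupp k]%M.

Lemma cmsetE i d (k : {cmonom I}) j : cmset i d k j = if j == i then d else k j.
Proof.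
rewrite /cmset cmE fsfun_fun in_fsetU in_fset1.
by case: eqVneq => [->|_] //=; case: finsuppP.
Qed.

Lemma cmsetK i (k : {cmonom I}) : cmset i (k i) (cmset i 0 k) = k.
Proof. by apply/eqP/cmP => j; rewrite !cmsetE; case: (eqVneq j i) => [->|]. Qed.

Lemma cmE_prod (T : Type) (r : seq T) (F : T -> {cmonom I}) i :
  (\big[mmul/1%M]_(x <- r) F x) i = (\sum_(x <- r) F x i)%N.
Proof. exact: (big_morph (fun k : {cmonom I} => k i) (fun a b => cmM i a b) (cm1 i)). Qed.

Lemma sum_cmE (k : {cmonom I}) i : (\sum_(j <- finsupp k) k j * (j == i))%N = k i.
Proof.
have [ik|iNk] := boolP (i \in finsupp k).
  rewrite (bigD1_seq i) ?fset_uniq //= eqxx muln1 big1 ?addn0 // => j ji.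
  by rewrite (negbTE ji) muln0.
rewrite big1_seq => [|j /andP[_ jk]]; first by apply/esym/eqP; rewrite cmE_eq0.
case: eqVneq => [ji|]; last by rewrite muln0.
by move: iNk; rewrite -ji jk.
Qed.

Lemma ucm_inj : injective (@ucm I).
Proof. by move=> i j /eqP/cmP/(_ j); rewrite !cmU eqxx; case: eqP. Qed.

Lemma cmE_notin (r : seq I) (k : {cmonom I}) i :
  {subset finsupp k <= r} -> i \notin r -> k i = 0%N.
Proof. by move=> sub ir; apply/eqP; rewrite cmE_eq0; apply: contra ir => /sub. Qed.

Lemma cmset0_subset (i : I) (r : seq I) (k : {cmonom I}) :
  {subset finsupp k <= i :: r} -> {subset finsupp (cmset i 0 k) <= r}.
Proof.
move=> sub j; rewrite -cmE_neq0 cmsetE; case: (eqVneq j i) => [->|ne] //= h.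
by move: (sub j); rewrite -cmE_neq0 inE (negbTE ne) => /(_ h).
Qed.

Lemma mdeg_uniq (r : seq I) (k : {cmonom I}) : uniq r ->
  {subset finsupp k <= r} -> mdeg k = (\sum_(i <- r) k i)%N.
Proof.
move=> ur sub; rewrite (@mdegEw _ _ (seq_fset tt r)); last first.
  by apply/fsubsetP => i /sub; rewrite seq_fsetE.
by rewrite (perm_big _ (seq_fset_perm _ _)) undup_id.
Qed.

Lemma mdeg_eq1 (k : {cmonom I}) : mdeg k = 1%N -> exists i, k = ucm i.
Proof.
move=> k1; have [e|[i ik]] := fset_0Vmem (finsupp k).
  by move: k1; rewrite mdegE e big_seq_fset0.
exists i; move: k1; rewrite mdegE (bigD1_seq i) ?fset_uniq //=.
have : k i != 0%N by rewrite cmE_neq0.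
case ki: (k i) => [|[|n]] //= _ [] /eqP; rewrite sum_nat_seq_eq0 => /allP rest.
apply/eqP/cmP => j; rewrite cmU; case: (eqVneq i j) => [<-|ij] //.
have [jk|] := boolP (j \in finsupp k); last by rewrite -cmE_eq0 => /eqP.
by apply/eqP; move: (rest j jk); rewrite eq_sym ij.
Qed.

End Cmonom.

Section CmonomEval.
Variables (I : choiceType) (R : comNzRingType) (f : I -> R).

Lemma cmevalEw (k : {cmonom I}) (d : {fset I}) : (finsupp k `<=` d)%fset ->
  cmeval f k = \prod_(i <- d) f i ^+ k i.
Proof.
move=> le; rewrite /cmeval (big_fset_incl _ le) // => i _.
by rewrite -cmE_neq0 negbK => /eqP ->; rewrite expr0.
Qed.

Lemma cmevalM k1 k2 : cmeval f (k1 * k2)%M = cmeval f k1 * cmeval f k2.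
Proof.
rewrite [LHS](cmevalEw (fsubset_refl _)) mdomD (cmevalEw (fsubsetUl _ (finsupp k2))).
rewrite (cmevalEw (fsubsetUr (finsupp k1) _)) -big_split /=.
by apply: eq_bigr => i _; rewrite cmM exprD.
Qed.

Lemma cmevalU i : cmeval f (ucm i) = f i.
Proof. by rewrite /cmeval mdomU big_seq_fset1 cmUU expr1. Qed.

Lemma cmeval1 : cmeval f 1%M = 1.
Proof. by rewrite /cmeval mdom1 big_seq_fset0. Qed.

Lemma cmeval_prod (T : Type) (r : seq T) (F : T -> {cmonom I}) :
  cmeval f (\big[mmul/1%M]_(x <- r) F x) = \prod_(x <- r) cmeval f (F x).
Proof. exact: (big_morph _ cmevalM cmeval1). Qed.

End CmonomEval.

Section CmonomWeight.
Variables (I : choiceType) (V : nmodType) (w : I -> V).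

Definition cmweight (k : {cmonom I}) : V := \sum_(i <- finsupp k) w i *+ k i.

Lemma cmweightEw (k : {cmonom I}) (d : {fset I}) : (finsupp k `<=` d)%fset ->
  cmweight k = \sum_(i <- d) w i *+ k i.
Proof.
move=> le; rewrite /cmweight (big_fset_incl _ le) // => i _.
by rewrite -cmE_neq0 negbK => /eqP ->.
Qed.

Lemma cmweightM k1 k2 : cmweight (k1 * k2)%M = cmweight k1 + cmweight k2.
Proof.
rewrite [LHS](cmweightEw (fsubset_refl _)) mdomD (cmweightEw (fsubsetUl _ (finsupp k2))).
rewrite (cmweightEw (fsubsetUr (finsupp k1) _)) -big_split /=.
by apply: eq_bigr => i _; rewrite cmM mulrnDr.
Qed.

Lemma cmweightU i : cmweight (ucm i) = w i.
Proof. by rewrite /cmweight mdomU big_seq_fset1 cmUU. Qed.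

Lemma cmweight1 : cmweight 1%M = 0.
Proof. by rewrite /cmweight mdom1 big_seq_fset0. Qed.

Lemma cmweight_prod (T : Type) (r : seq T) (F : T -> {cmonom I}) :
  cmweight (\big[mmul/1%M]_(x <- r) F x) = \sum_(x <- r) cmweight (F x).
Proof. exact: (big_morph _ cmweightM cmweight1). Qed.

End CmonomWeight.

Lemma mwtE (A : comNzRingType) (M : lmodType A) (k : {cmonom (GVar M)}) :
  mwt k = cmweight (fun v : GVar M => v.1) k.
Proof. by apply: eq_bigr => v _; rewrite -mulr_natr natn mulnC. Qed.

Section GammaDualCalculus.
Variables (A : comNzRingType) (M : lmodType A).

Definition gshift (u : GFun M) (w : {cmonom (GVar M)}) : GFun M :=
  fun k => u (k * w)%M.

Lemma glin_is_additive (u : GFun M) : additive (glin u).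
Proof. exact: (@mmap_is_additive _ _ _ idfun u). Qed.

HB.instance Definition _ (u : GFun M) :=
  GRing.isAdditive.Build (GPre M) A (glin u) (glin_is_additive u).

Lemma glinU (u : GFun M) (c : A) k : glin u << c *g k >> = c * u k.
Proof. exact: (@mmapU _ _ _ idfun u). Qed.

Lemma glin_mulUl (u : GFun M) w (q : GPre M) : glin u (<< w >> * q) = glin (gshift u w) q.
Proof.
rewrite [q]monalgE mulr_sumr !raddf_sum /=; apply: eq_bigr => k _.
by rewrite malgM_def fgmulUU mul1r !glinU /gshift mulmC.
Qed.

Lemma gdotE (u v : GFun M) k :
  gdot u v k = mmap (glin u) v (cmeval (@DeltaVar A M) k).
Proof. by rewrite /gdot /Delta msuppU1 big_seq_fset1 mcoeffUU !mpolyC1E mul1r. Qed.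

Lemma mmap_glin_mulUl (u v : GFun M) w1 w2 (T : GPre2 M) :
  mmap (glin u) v (((<< w1 >> : GPre M)%:MP * << w2 >>) * T) =
  mmap (glin (gshift u w1)) (gshift v w2) T.
Proof.
rewrite [T]monalgE mulr_sumr !raddf_sum /=; apply: eq_bigr => k _.
rewrite !malgM_def !fgmulUU mulr1 mul1m !mmapU.
transitivity (glin u (<< w1 >> * T@_k) * v (w2 * k)%M); first by [].
by rewrite glin_mulUl /gshift mulmC.
Qed.

Lemma gdot1 (u v : GFun M) : gdot u v 1%M = u 1%M * v 1%M.
Proof.
rewrite gdotE cmeval1 -[1 : GPre2 M]/<< (1 : GPre M) *g 1%M >> mmapU.
transitivity (glin u << (1 : A) *g 1%M >> * v 1%M); first by [].
by rewrite glinU mul1r.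
Qed.

Lemma gdot_mulUl (u v : GFun M) (a : nat) (y : dual M) k :
  gdot u v (ucm ((a, y) : GVar M) * k)%M =
  \sum_(i < a.+1) gdot (gshift u (ucm ((i : nat, y) : GVar M)))
                       (gshift v (ucm (((a - i)%N, y) : GVar M))) k.
Proof.
rewrite gdotE cmevalM cmevalU {1}/DeltaVar /= mulr_suml raddf_sum /=.
apply: eq_bigr => i _.
by rewrite gdotE -mmap_glin_mulUl.
Qed.

End GammaDualCalculus.

Section SplitVar.
Variables (A : comNzRingType) (J : choiceType).
Local Notation P := {malg A[{cmonom J}]}.

(* [splitvar j] : A[J] -> A[J][t] substitutes [t] for the variable [j]. *)
Definition splitvar_monom (j : J) (k : {cmonom J}) : {poly P} :=
  (<< cmset j 0 k >> : P)%:P * 'X^(k j).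

Lemma splitvar_monom_is_multiplicative j : mmorphism (splitvar_monom j).
Proof.
rewrite /splitvar_monom; split=> [k1 k2|].
  have -> : cmset j 0 (k1 * k2)%M = (cmset j 0 k1 * cmset j 0 k2)%M.
    by apply/eqP/cmP => i; rewrite cmM !cmsetE cmM; case: eqP.
  have -> : (<< (cmset j 0 k1 * cmset j 0 k2)%M >> : P) =
            << cmset j 0 k1 >> * << cmset j 0 k2 >>.
    by rewrite malgM_def fgmulUU mulr1.
  by rewrite cmM exprD polyCM mulrACA.
have -> : cmset j 0 1%M = 1%M by apply/eqP/cmP => i; rewrite cmsetE cm1; case: eqP.
by rewrite cm1 expr0 mulr1 polyC1.
Qed.

HB.instance Definition _ j := isMultiplicative.Build {cmonom J} {poly P}
  (splitvar_monom j) (splitvar_monom_is_multiplicative j).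

Definition splitvar j : P -> {poly P} :=
  mmap (polyC \o (@malgC {cmonom J} A)) (splitvar_monom j).

Lemma splitvarM j (p q : P) : splitvar j (p * q) = splitvar j p * splitvar j q.
Proof. exact: rmorphM. Qed.

Lemma splitvar_coef j d (p : P) (k : {cmonom J}) :
  k j = 0%N -> ((splitvar j p)`_d)@_k = p@_(cmset j d k).
Proof.
move=> kj; rewrite /splitvar mmapE coef_sum raddf_sum.
rewrite [in RHS](monalgE p) raddf_sum; apply: eq_bigr => l _ /=.
rewrite /splitvar_monom mulrA -polyCM coefMXn coefC mcoeffU.
case: (eqVneq l (cmset j d k)) => [->|ne].
  have -> : cmset j 0 (cmset j d k) = k.
    by apply/eqP/cmP => i; rewrite !cmsetE; case: eqP => [->|].
  by rewrite cmsetE eqxx ltnn subnn eqxx mcoeffCM mcoeffU1 eqxx mulr1.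
rewrite mulr0n; case: ltnP => h; first by rewrite mcoeff0.
case: (eqVneq (d - l j)%N 0%N) => [e|_] /=; last by rewrite mcoeff0.
have lj : l j = d by apply/eqP; rewrite eqn_leq h /= -subn_eq0 e.
rewrite mcoeffCM mcoeffU1; case: (eqVneq (cmset j 0 l) k) => [e2|_]; last by rewrite mulr0.
case/eqP: ne; apply/eqP/cmP => i; rewrite cmsetE.
by case: eqP => [->//|ni]; rewrite -e2 cmsetE; case: eqP.
Qed.

End SplitVar.

Section Homogeneous.
Variables (A : comNzRingType) (J : choiceType).
Local Notation P := {malg A[{cmonom J}]}.

Definition mhomog (d : nat) (p : P) := forall c, mdeg c != d -> p@_c = 0.

Lemma mhomog1 : mhomog 0 1.
Proof. by move=> c; rewrite mcoeff1; case: (eqVneq c 1%M) => [->|]; rewrite ?mdeg1. Qed.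

Lemma mhomogM d1 d2 (p q : P) : mhomog d1 p -> mhomog d2 q -> mhomog (d1 + d2) (p * q).
Proof.
move=> hp hq c dc; rewrite mcoeffMl big1 // => k1 _; rewrite big1 // => k2 _.
case: (eqVneq (k1 * k2)%M c) => [e|]; last by rewrite mulr0n.
case: (eqVneq (mdeg k1) d1) => [e1|n1]; last by rewrite hp // mul0r mul0rn.
case: (eqVneq (mdeg k2) d2) => [e2|n2]; last by rewrite hq // mulr0 mul0rn.
by move: dc; rewrite -e mdegM e1 e2 eqxx.
Qed.

Lemma mcoeff_linpoly (e : {malg A[J]}) c :
  (linpoly e)@_c = \sum_(i <- msupp e) e@_i * (ucm i == c)%:R.
Proof.
rewrite /linpoly (big_morph (mcoeff c) (mcoeffD c) (mcoeff0 c)).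
by apply: eq_bigr => i _; rewrite mcoeffZ /mvar mcoeffU1.
Qed.

Lemma mhomog_linpoly (e : {malg A[J]}) : mhomog 1 (linpoly e).
Proof.
move=> c dc; rewrite mcoeff_linpoly big1 // => i _.
case: (eqVneq (ucm i) c) => [ic|]; last by rewrite mulr0.
by rewrite -ic mdegU in dc.
Qed.

Lemma mcoeff_linpolyU (e : {malg A[J]}) j : (linpoly e)@_(ucm j) = e@_j.
Proof.
rewrite mcoeff_linpoly [in RHS](monalgE e) raddf_sum.
by apply: eq_bigr => i _; rewrite (inj_eq (@ucm_inj J)) [RHS]mcoeffU mulr_natr.
Qed.

Lemma mhomog_cmeval (M : lmodType A) (G : M -> {malg A[J]}) (k : {cmonom M}) :
  mhomog (mdeg k) (cmeval (fun m => linpoly (G m)) k).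
Proof.
rewrite mdegE /cmeval; apply: (big_ind2 mhomog); first exact: mhomog1.
  by move=> ? ? ? ? h1 h2; apply: mhomogM.
move=> m _; elim: (k m) => [|n IHn] /=; first by rewrite expr0; exact: mhomog1.
by rewrite exprS -add1n; apply: mhomogM => //; apply: mhomog_linpoly.
Qed.

End Homogeneous.

Lemma prod_natb (R : pzSemiRingType) (T : Type) (s : seq T) (b : T -> bool) :
  \prod_(t <- s) ((b t)%:R : R) = (all b s)%:R.
Proof.
elim: s => [|t s IHs]; first by rewrite big_nil.
by rewrite big_cons IHs /= -natrM mulnb.
Qed.

Section Matching.
Variables (A : comNzRingType) (M : lmodType A) (J : choiceType) (x : J -> dual M).
Local Notation P := {malg A[{cmonom J}]}.

Definition gmonom (js : seq J) (c : {cmonom J}) : {cmonom (GVar M)} :=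
  \big[mmul/1%M]_(j <- js) ucm ((c j, x j) : GVar M).

Definition gmatch (js : seq J) (u : GFun M) (p : P) :=
  forall c : {cmonom J}, {subset finsupp c <= js} -> u (gmonom js c) = p@_c.

Lemma eq_gmonom (js : seq J) (c c' : {cmonom J}) :
  {in js, c =1 c'} -> gmonom js c = gmonom js c'.
Proof. by move=> h; apply: eq_big_seq => j /h ->. Qed.

Lemma mwt_gmonom (js : seq J) (c : {cmonom J}) : uniq js ->
  {subset finsupp c <= js} -> mwt (gmonom js c) = mdeg c.
Proof.
move=> ujs sub; rewrite mwtE cmweight_prod (mdeg_uniq ujs sub).
by apply: eq_bigr => j _; rewrite cmweightU.
Qed.

Lemma gmatch_gshift j (js : seq J) (u : GFun M) (p : P) : j \notin js ->
  gmatch (j :: js) u p ->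
  forall d, gmatch js (gshift u (ucm ((d, x j) : GVar M))) ((splitvar j p)`_d).
Proof.
move=> jNjs up d c sub; rewrite splitvar_coef; last exact: cmE_notin jNjs.
rewrite -up; last first.
  move=> i; rewrite -cmE_neq0 cmsetE inE; case: (eqVneq i j) => [->|_] //= h.
  by apply: sub; rewrite -cmE_neq0.
rewrite /gshift /gmonom big_cons cmsetE eqxx [in LHS]mulmC; congr (u (_ * _)%M).
apply: eq_big_seq => i ijs; rewrite cmsetE; case: (eqVneq i j) => // e.
by move: jNjs; rewrite -e ijs.
Qed.

Lemma gmatch_gdot (js : seq J) : uniq js -> forall (u v : GFun M) (p q : P),
  gmatch js u p -> gmatch js v q -> gmatch js (gdot u v) (p * q).
Proof.
elim: js => [|j js IHjs] ujs u v p q up vq c sub.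
  have sub1 : {subset finsupp (1%M : {cmonom J}) <= [::]}.
    by move=> i; rewrite mdom1 in_fset0.
  have -> : c = 1%M by apply/eqP/cmP => i; rewrite cm1; apply: (cmE_notin sub).
  have := up _ sub1; have := vq _ sub1; rewrite /gmonom !big_nil => vq1 up1.
  by rewrite gdot1 up1 vq1 (rmorphM (mcoeff 1%M)).
case/andP: ujs => jNjs ujs.
rewrite /gmonom big_cons gdot_mulUl -/(gmonom js c).
rewrite (@eq_gmonom _ _ (cmset j 0 c)); last first.
  by move=> i ijs; rewrite cmsetE; case: (eqVneq i j) => // e; move: jNjs; rewrite -e ijs.
have sub0 := cmset0_subset sub.
transitivity (\sum_(i < (c j).+1)
    ((splitvar j p)`_i * (splitvar j q)`_(c j - i))@_(cmset j 0 c)).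
  by apply: eq_bigr => i _; apply: IHjs => //; exact: gmatch_gshift.
rewrite -raddf_sum -coefM -splitvarM.
have := @splitvar_coef _ _ j (c j) (p * q) (cmset j 0 c).
by rewrite cmsetE eqxx cmsetK; apply.
Qed.

Lemma gmatch_geps (js : seq J) : gmatch js (@geps A M) 1.
Proof.
move=> c sub; rewrite /geps /gmonom cmeval_prod mcoeff1.
under eq_bigr do rewrite cmevalU /=.
rewrite prod_natb; congr ((nat_of_bool _)%:R).
apply/idP/idP => [/allP c0|/eqP->]; last by apply/allP => i _; rewrite cm1.
apply/cmP => i; rewrite cm1.
have [ijs|iNjs] := boolP (i \in js); last exact: cmE_notin sub iNjs.
exact/eqP/c0.
Qed.

Lemma gev_cmweight (m : M) (k : {cmonom (GVar M)}) : mwt k = 1%N ->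
  gev m k = cmweight (fun v : GVar M => if v.1 == 1%N then v.2 m else 0) k.
Proof.
move=> k1; rewrite /gev k1 eqxx /cmweight big_mkcond /=.
apply: eq_big_seq => v vk; case: eqP => [v1|_]; last by rewrite mul0rn.
have : (k v * v.1 <= mwt k)%N by rewrite /mwt (bigD1_seq v) ?fset_uniq ?leq_addr.
rewrite k1 v1 muln1; have : k v != 0%N by rewrite cmE_neq0.
by case: (k v) => [|[|]].
Qed.

Lemma gmatch_gev (js : seq J) (G : M -> {malg A[J]}) (m : M) : uniq js ->
  {in js, forall j, (G m)@_j = x j m} -> gmatch js (gev m) (linpoly (G m)).
Proof.
move=> ujs Gx c; have [/mdeg_eq1[j ->] sub|c1 sub] := eqVneq (mdeg c) 1%N; last first.
  by rewrite mhomog_linpoly // /gev mwt_gmonom // (negbTE c1).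
have jjs : j \in js by apply: sub; rewrite mdomU in_fset1.
rewrite gev_cmweight ?mwt_gmonom ?mdegU // cmweight_prod mcoeff_linpolyU Gx //.
under eq_bigr do rewrite cmweightU cmU /=.
rewrite (bigD1_seq j) //= eqxx /= big1 ?addr0 // => i ij.
by rewrite [j == i]eq_sym (negbTE ij).
Qed.

Lemma gmatch_gev_mon (js : seq J) (G : M -> {malg A[J]}) (k : {cmonom M}) :
  uniq js -> (forall m, {in js, forall j, (G m)@_j = x j m}) ->
  gmatch js (gev_mon k) (cmeval (fun m => linpoly (G m)) k).
Proof.
move=> ujs Gx; rewrite /gev_mon /cmeval.
apply: (big_ind2 (gmatch js)); first exact: gmatch_geps.
  by move=> u1 p1 u2 p2 h1 h2; apply: gmatch_gdot.
move=> m _; elim: (k m) => [|n IHn] /=; first by rewrite expr0; exact: gmatch_geps.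
by rewrite exprS; apply: gmatch_gdot => //; apply: gmatch_gev.
Qed.

End Matching.

Section Kernels.
Variables (A : comNzRingType) (M : lmodType A).

Lemma mcoeff_Symmap (I : choiceType) (g : {linear M -> {malg A[I]}}) (s : SymPre M) b :
  (Symmap g s)@_b = \sum_(k <- msupp s) s@_k * (cmeval (fun m => linpoly (g m)) k)@_b.
Proof.
rewrite /Symmap (big_morph (mcoeff b) (mcoeffD b) (mcoeff0 b)).
by apply: eq_bigr => k _; rewrite mcoeffZ.
Qed.

Lemma SymToGammaDual_gmonom (J : choiceType) (x : J -> dual M) (js : seq J)
    (g : {linear M -> {malg A[J]}}) (s : SymPre M) (c : {cmonom J}) :
  uniq js -> {subset finsupp c <= js} ->
  (forall m, {in js, forall j, (g m)@_j = x j m}) ->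
  SymToGammaDual (mdeg c) s (gmonom x js c) = (Symmap g s)@_c.
Proof.
move=> ujs sub gx; rewrite mcoeff_Symmap /SymToGammaDual big_mkcond /=.
apply: eq_bigr => k _; case: eqP => [_|/eqP kc].
  by rewrite (gmatch_gev_mon k ujs gx sub).
by rewrite mhomog_cmeval ?mulr0 // eq_sym.
Qed.

Fact coord_form_subproof (I : choiceType) (g : {linear M -> {malg A[I]}}) j a u v :
  (g (a *: u + v))@_j = a * (g u)@_j + (g v)@_j.
Proof. by rewrite linearP mcoeffD mcoeffZ. Qed.

Definition coord_form (I : choiceType) (g : {linear M -> {malg A[I]}}) (j : I) :=
  @Dual A M (fun m => (g m)@_j) (coord_form_subproof g j).

Lemma in_ker_in_all_Lg (s : SymPre M) : in_ker_SymToGammaDual s -> in_all_Lg s.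
Proof.
move=> sker I g; apply/malgP => b; rewrite mcoeff0.
have sub : {subset finsupp b <= (finsupp b : seq I)} by [].
rewrite -(SymToGammaDual_gmonom (x := coord_form g) s (fset_uniq _) sub) //.
exact/sker/mwt_gmonom/sub/fset_uniq.
Qed.

Definition forms_map (J : choiceType) (js : seq J) (x : J -> dual M) (m : M)
  : {malg A[J]} :=
  \sum_(j <- js) x j m *: (<< j >> : {malg A[J]}).

Lemma forms_map_is_linear J js x : linear (@forms_map J js x).
Proof.
move=> a u v; rewrite /forms_map scaler_sumr -big_split /=; apply: eq_bigr => j _.
by rewrite dfun_lin scalerDl scalerA.
Qed.

HB.instance Definition _ J js x := GRing.isLinear.Build A M {malg A[J]} *:%R
  (@forms_map J js x) (forms_map_is_linear js x).

Lemma mcoeff_forms_map (J : choiceType) (js : seq J) (x : J -> dual M) m :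
  uniq js -> {in js, forall j, (forms_map js x m)@_j = x j m}.
Proof.
move=> ujs j jjs; rewrite /forms_map (big_morph (mcoeff j) (mcoeffD j) (mcoeff0 j)).
rewrite (bigD1_seq j) //= mcoeffZ mcoeffU eqxx mulr1 big1 ?addr0 // => i ij.
by rewrite mcoeffZ mcoeffU (negbTE ij) mulr0.
Qed.

Lemma gmonom_surj (mu : {cmonom (GVar M)}) :
  exists (js : seq (GVar M * nat)%type) (x : (GVar M * nat)%type -> dual M)
         (c : {cmonom (GVar M * nat)%type}),
    [/\ uniq js, {subset finsupp c <= js} & gmonom x js c = mu].
Proof.
pose js := [seq (v, i) | v <- finsupp mu, i <- iota 0 (mu v)].
pose c : {cmonom (GVar M * nat)%type} := [cmonom p.1.1 | p in seq_fset tt js]%M.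
have cE p : c p = if p \in js then p.1.1 else 0%N.
  by rewrite /c cmE fsfun_fun seq_fsetE.
exists js, (fun p => p.1.2), c; split.
- rewrite allpairs_uniq_dep ?fset_uniq // => [v _|]; first exact: iota_uniq.
  by move=> [v i] [w j] _ _ [-> ->].
- by move=> p; rewrite -cmE_neq0 cE; case: (p \in js).
apply/eqP/cmP => w; rewrite /gmonom cmE_prod big_seq.
rewrite (eq_bigr (fun p => nat_of_bool (p.1 == w))); last first.
  by move=> p pjs; rewrite cE pjs cmU -surjective_pairing.
rewrite -big_seq big_allpairs_dep -[RHS]sum_cmE; apply: eq_bigr => v _ /=.
by rewrite -(subn0 (mu v)) -sum_nat_const_nat /index_iota subn0.
Qed.

Lemma in_all_Lg_in_ker (s : SymPre M) : in_all_Lg s -> in_ker_SymToGammaDual s.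
Proof.
move=> sLg n mu <-; have [js [x [c [ujs sub <-]]]] := gmonom_surj mu.
rewrite (mwt_gmonom x ujs sub).
rewrite (SymToGammaDual_gmonom s ujs sub (fun m => mcoeff_forms_map x m ujs)).
by rewrite sLg mcoeff0.
Qed.

End Kernels.

Theorem theorem4p2 (A : comNzRingType) (M : lmodType A) :
  noetherian_ring A -> module_fg M ->
  forall s : SymPre M, in_all_Lg s <-> in_ker_SymToGammaDual s.
Proof.
move=> _ _ s; split; [exact: in_all_Lg_in_ker | exact: in_ker_in_all_Lg].
Qed.
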